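(* Let $N\ge 1$, let $\mathbf{x}\in\mathbb{R}^N$ and let $\mathcal{F}=\mathrm{DFT}(\mathbf{x})\in\mathbb{C}^N$ be its frequency spectrum. Let $\mathbf{W}\in\mathbb{C}^{N\times N}$ be a weight matrix and $\mathbf{b}\in\mathbb{C}^N$ a bias vector, and set $\tilde{\mathcal{F}}=\mathbf{W}\mathcal{F}+\mathbf{b}$. For $i=0,1,\dots,N-1$ define $$w_i=\left[\mathrm{diag}(\mathbf{W},i),\ \mathrm{diag}(\mathbf{W},i-N)\right]\in\mathbb{C}^N,\qquad \Omega_i=\mathrm{IDFT}(w_i)\in\mathbb{C}^N,$$ $$\mathcal{M}_i(\mathbf{x})=\mathbf{x}\odot\left[e^{-j\frac{2\pi}{N}ik}\right]_{k=0,1,\dots,N-1}\in\mathbb{C}^N .$$ Then $$\mathrm{IDFT}(\tilde{\mathcal{F}})=\sum_{i=0}^{N-1}\Omega_i\circledast\mathcal{M}_i(\mathbf{x})+\mathrm{IDFT}(\mathbf{b}),$$ i.e. $\tilde{\mathcal{F}}=\mathbf{W}\mathcal{F}+\mathbf{b}$ and $\sum_{i=0}^{N-1}\Omega_i\circledast\mathcal{M}_i(\mathbf{x})+\mathrm{IDFT}(\mathbf{b})$ form a DFT pair.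
   Context: Vectors are indexed from $0$ to $N-1$ and $j$ denotes the imaginary unit. The discrete Fourier transform of $\mathbf{x}\in\mathbb{C}^N$ is $\mathrm{DFT}(\mathbf{x})[k]=\sum_{n=0}^{N-1}e^{-j\frac{2\pi}{N}nk}\mathbf{x}[n]$, and the inverse is $\mathrm{IDFT}(\mathcal{F})[n]=\frac{1}{N}\sum_{k=0}^{N-1}\mathcal{F}[k]e^{j\frac{2\pi}{N}kn}$. The symbol $\circledast$ denotes circular convolution, $(\mathbf{u}\circledast\mathbf{v})[n]=\sum_{m=0}^{N-1}\mathbf{u}[m]\mathbf{v}[(n-m)\bmod N]$; $\odot$ is the Hadamard (element-wise) product; $[\cdot,\cdot]$ denotes concatenation of two vectors. For an integer $i$ with $|i|<N$, $\mathrm{diag}(\mathbf{W},i)\in\mathbb{C}^{N-|i|}$ is the $i$-th diagonal of $\mathbf{W}$: for $i\ge 0$ it is $(\mathbf{W}[0,i],\mathbf{W}[1,i+1],\dots,\mathbf{W}[N-1-i,N-1])$ (the main diagonal for $i=0$, a diagonal above it for $i>0$), and for $i<0$ it is $(\mathbf{W}[-i,0],\mathbf{W}[-i+1,1],\dots,\mathbf{W}[N-1,N-1+i])$ (a diagonal below the main one); by convention $\mathrm{diag}(\mathbf{W},-N)=\emptyset$ (the empty vector). $\mathcal{M}_i(\mathbf{x})$ is called the $i$-th modulated version of $\mathbf{x}$, with $\mathcal{M}_0(\mathbf{x})=\mathbf{x}$. *)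

From HB Require Import structures.
From mathcomp Require Import all_boot all_order all_algebra.
From mathcomp Require Import all_classical all_reals.
From mathcomp Require Import trigo.
From mathcomp.real_closed Require Import complex.
Set Implicit Arguments. Unset Strict Implicit. Unset Printing Implicit Defensive.
Import Order.TTheory GRing.Theory Num.Theory.
Local Open Scope ring_scope.

Section DFTdefs.
Variable R : realType.
Local Notation C := R[i].

Definition expj (t : R) : C := Complex (cos t) (sin t).

Variable N : nat.

Definition DFT (x : 'cV[C]_N) : 'cV[C]_N :=
  \col_(k < N) \sum_(n < N) expj (- (2 * pi * n%:R * k%:R / N%:R)) * x n ord0.

Definition IDFT (F : 'cV[C]_N) : 'cV[C]_N :=
  \col_(n < N) ((N%:R)^-1 * \sum_(k < N) F k ord0 * expj (2 * pi * k%:R * n%:R / N%:R)).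

Lemma ord_gt0 (i : 'I_N) : (0 < N)%N.
Proof. by case: i => m; apply: leq_ltn_trans. Qed.

Definition subI (n m : 'I_N) : 'I_N :=
  Ordinal (ltn_pmod (n + N - m) (ord_gt0 n)).

Definition circconv (u v : 'cV[C]_N) : 'cV[C]_N :=
  \col_(n < N) \sum_(m < N) u m ord0 * v (subI n m) ord0.

Definition mxn (W : 'M[C]_N) (a b : nat) : C :=
  match @insub _ (fun k => (k < N)%N) 'I_N a, @insub _ (fun k => (k < N)%N) 'I_N b with
  | Some p, Some q => W p q
  | _, _ => 0
  end.

(* diag(W, i): the i-th diagonal, of length N - |i| (empty for |i| >= N) *)
Definition mdiag (W : 'M[C]_N) (i : int) : seq C :=
  match i with
  | Posz m => [seq mxn W k (k + m) | k <- iota 0 (N - m)]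
  | Negz _ => let m := `|i|%N in [seq mxn W (k + m) k | k <- iota 0 (N - m)]
  end.

Definition wvec (W : 'M[C]_N) (i : 'I_N) : 'cV[C]_N :=
  \col_(k < N) nth 0 (mdiag W (i%:Z) ++ mdiag W (i%:Z - N%:Z)) k.

Definition Omega (W : 'M[C]_N) (i : 'I_N) : 'cV[C]_N := IDFT (wvec W i).

Definition modul (i : 'I_N) (x : 'cV[C]_N) : 'cV[C]_N :=
  \col_(k < N) (x k ord0 * expj (- (2 * pi * i%:R * k%:R / N%:R))).

End DFTdefs.

(* Splitting the sum (W F)[k] = sum_m W[k,m] F[m] along m = k + i (mod N), the
   coefficient W[k, k + i mod N] is w_i[k], so W F = sum_i w_i ⊙ (F shifted by i).
   Modulating x by the i-th character shifts its spectrum by i, so the shifted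
   spectrum is DFT(M_i x), and the convolution theorem
   IDFT(u ⊙ DFT v) = IDFT(u) ⊛ v turns each summand into Omega_i ⊛ M_i(x);
   linearity of the IDFT finishes. *)

From HB Require Import structures.
From mathcomp Require Import all_boot all_order all_algebra.
From mathcomp Require Import all_classical all_reals.
From mathcomp Require Import trigo.
From mathcomp.real_closed Require Import complex.
From mathcomp Require Import zify ring.
Import Order.TTheory GRing.Theory Num.Theory.
Local Open Scope ring_scope.

Section Fourier.
Variables (R : realType) (N : nat).
Local Notation C := R[i].

Lemma expj0 : expj 0 = 1 :> C.
Proof. by rewrite /expj cos0 sin0. Qed.

Lemma expjD (s t : R) : expj (s + t) = expj s * expj t.
Proof.
by rewrite /expj cosD sinD; apply/eqP; rewrite eq_complex /= !eqxx andTb; apply/eqP; ring.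
Qed.

Lemma expjMn (t : R) n : expj (t *+ n) = expj t ^+ n.
Proof. by elim: n => [|n IHn]; rewrite ?expj0 // mulrS expjD IHn exprS. Qed.

Lemma expj_mulN (t : R) : expj t * expj (- t) = 1.
Proof. by rewrite -expjD subrr expj0. Qed.

Lemma expj_neq0 (t : R) : expj t != 0.
Proof.
by apply: contraPneq (expj_mulN t) => ->; rewrite mul0r => /eqP; rewrite eq_sym oner_eq0.
Qed.

Lemma expjN (t : R) : expj (- t) = (expj t)^-1.
Proof. by rewrite -[RHS]mulr1 -(expj_mulN t) mulKf ?expj_neq0. Qed.

Definition omega : C := expj (2 * pi / N%:R).

Lemma expj_omega (a b : nat) :
  expj (2 * pi * a%:R * b%:R / N%:R) = omega ^+ a ^+ b.
Proof. by rewrite -exprM -expjMn; congr expj; ring. Qed.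

Lemma expjN_omega (a b : nat) :
  expj (- (2 * pi * a%:R * b%:R / N%:R)) = (omega ^+ a ^+ b)^-1.
Proof. by rewrite expjN expj_omega. Qed.

Lemma omega_unity : omega ^+ N = 1.
Proof.
have [->|N_gt0] := posnP N; first exact: expr0.
rewrite -expjMn -[_ *+ N]mulr_natr mulfVK ?pnatr_eq0 -?lt0n //.
by rewrite mulr_natl /expj cos2pi sin2pi.
Qed.

Lemma omegaX_mod a {m1 m2} :
  (m1 = m2 %[mod N])%N -> omega ^+ a ^+ m1 = omega ^+ a ^+ m2.
Proof.
have unity : (omega ^+ a) ^+ N = 1 by rewrite exprAC omega_unity expr1n.
by move=> e; rewrite -(expr_mod _ unity) e expr_mod.
Qed.

Definition addI (k i : 'I_N) : 'I_N := Ordinal (ltn_pmod (k + i) (ord_gt0 k)).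

Lemma addI_mod (k i : 'I_N) : (addI k i = k + i %[mod N])%N.
Proof. exact: modn_mod. Qed.

Lemma subI_addr (n p : 'I_N) : (subI n p + p = n %[mod N])%N.
Proof.
have le_pnN : (p <= n + N)%N by rewrite ltnW // ltn_addl.
by rewrite modnDml subnK // modnDr.
Qed.

Lemma ord_mod_inj (i j : 'I_N) : (i = j %[mod N])%N -> i = j.
Proof. by rewrite !modn_small // => /ord_inj. Qed.

Lemma subI_inv (n : 'I_N) : involutive (subI n).
Proof.
move=> p; apply/ord_mod_inj/eqP.
by rewrite -(eqn_modDr (subI n p)) subI_addr addnC subI_addr.
Qed.

Lemma addIK (k : 'I_N) : cancel (addI k) (fun m => subI m k).
Proof.
move=> i; apply/ord_mod_inj/eqP.
by rewrite -(eqn_modDr k) subI_addr addI_mod addnC.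
Qed.

Lemma omegaX_addI (n k i : 'I_N) :
  omega ^+ n ^+ addI k i = omega ^+ n ^+ k * omega ^+ n ^+ i.
Proof. by rewrite (omegaX_mod n (addI_mod k i)) exprD. Qed.

Lemma omegaX_subI (k n p : 'I_N) :
  omega ^+ k ^+ subI n p = omega ^+ k ^+ n / omega ^+ k ^+ p.
Proof.
by rewrite -(omegaX_mod k (subI_addr n p)) exprD mulfK // !expf_neq0 // expj_neq0.
Qed.

Lemma mxnE (W : 'M[C]_N) (p q : 'I_N) : mxn W p q = W p q.
Proof.
rewrite /mxn; case: insubP => [p' _ /val_inj ->|]; last by rewrite ltn_ord.
by case: insubP => [q' _ /val_inj ->|]; last by rewrite ltn_ord.
Qed.

Lemma wvecE (W : 'M[C]_N) (i k : 'I_N) : wvec W i k ord0 = W k (addI k i).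
Proof.
have lt_iN := ltn_ord i; have lt_kN := ltn_ord k.
rewrite /wvec mxE.
have -> : i%:Z - N%:Z = Negz (N - i - 1) by rewrite NegzE; lia.
rewrite /mdiag nth_cat size_map size_iota.
case: ltnP => [lt_k_Ni | le_Ni_k].
  rewrite (nth_map 0%N) ?size_iota // nth_iota // add0n.
  have -> : (k + i = addI k i)%N by rewrite /= modn_small //; lia.
  exact: mxnE.
have -> : `|Negz (N - i - 1)|%N = (N - i)%N by rewrite /=; lia.
rewrite (nth_map 0%N) ?size_iota ?nth_iota; try lia.
have -> : (k - (N - i) + (N - i) = k)%N by lia.
have -> : (k - (N - i) = addI k i)%N.
  rewrite /= (_ : k + i = k - (N - i) + N)%N; last by lia.
  by rewrite modnDr modn_small //; lia.
exact: mxnE.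
Qed.

Definition cshift (i : 'I_N) (F : 'cV[C]_N) : 'cV[C]_N := \col_k F (addI k i) ord0.

Lemma mulmx_wvec (W : 'M[C]_N) (F : 'cV[C]_N) :
  W *m F = \sum_(i < N) map2_mx *%R (wvec W i) (cshift i F).
Proof.
apply/matrixP => k j; rewrite ord1 mxE summxE.
rewrite (reindex_inj (can_inj (addIK k))).
by apply: eq_bigr => i _; rewrite mxE wvecE mxE.
Qed.

Lemma DFT_modul (i : 'I_N) (x : 'cV[C]_N) : DFT (modul i x) = cshift i (DFT x).
Proof.
apply/matrixP => k j; rewrite ord1 !mxE; apply: eq_bigr => n _.
rewrite mxE !expjN_omega [omega ^+ i ^+ n]exprAC omegaX_addI invfM; ring.
Qed.

Lemma IDFT_mul_DFT (u v : 'cV[C]_N) :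
  IDFT (map2_mx *%R u (DFT v)) = circconv (IDFT u) v.
Proof.
apply/matrixP => n j; rewrite ord1 !mxE [RHS](reindex_inj (can_inj (subI_inv n))) /=.
under [RHS]eq_bigr => p _ do rewrite subI_inv mxE -mulrA mulr_suml.
rewrite -mulr_sumr exchange_big; congr (_ * _); apply: eq_bigr => k _ /=.
rewrite !mxE mulr_sumr mulr_suml; apply: eq_bigr => p _.
rewrite expjN_omega !expj_omega [omega ^+ p ^+ k]exprAC omegaX_subI; ring.
Qed.

Lemma IDFT0 : IDFT 0 = 0 :> 'cV[C]_N.
Proof. by apply/matrixP => n j; rewrite !mxE big1 ?mulr0 // => k _; rewrite mxE mul0r. Qed.

Lemma IDFTD (F G : 'cV[C]_N) : IDFT (F + G) = IDFT F + IDFT G.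
Proof.
apply/matrixP => n j; rewrite !mxE -mulrDr -big_split.
by congr (_ * _); apply: eq_bigr => k _; rewrite mxE mulrDl.
Qed.

Lemma IDFT_sum I (r : seq I) (P : pred I) (F : I -> 'cV[C]_N) :
  IDFT (\sum_(i <- r | P i) F i) = \sum_(i <- r | P i) IDFT (F i).
Proof. exact: (big_morph _ IDFTD IDFT0). Qed.
End Fourier.

Theorem theorem1 (R : realType) (N : nat) (hN : (1 <= N)%N)
  (x : 'cV[R]_N) (W : 'M[R[i]]_N) (b : 'cV[R[i]]_N) :
  let xc : 'cV[R[i]]_N := map_mx (fun r : R => Complex r 0) x in
  let F := DFT xc in
  let Ft := W *m F + b in
  IDFT Ft = \sum_(i < N) circconv (Omega W i) (modul i xc) + IDFT b.
Proof.
move=> xc F Ft; rewrite /Ft IDFTD mulmx_wvec IDFT_sum; congr (_ + _).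
by apply: eq_bigr => i _; rewrite /F -DFT_modul IDFT_mul_DFT.
Qed.
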